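(* Let $a=a_0+\underline a$ and $b=b_0+\underline b$ be paravectors in $\mathrm{Cl}_{0,7}$, and write $e=e_{1234567}$. Then \begin{align*} 16[abI]_0&=a_0b_0-\underline a\cdot\underline b,\\ 16[abI]_1&=a_0\underline b+\underline ab_0-[(\underline a\wedge\underline b)W]_1,\\ 16[abI]_2&=\underline a\wedge\underline b-[(a_0\underline b+\underline ab_0)W]_2+[(\underline a\wedge\underline b)We]_2,\\ 16[abI]_3&=-(a_0b_0-\underline a\cdot\underline b)W+[(a_0\underline b+\underline ab_0)We]_3-[(\underline a\wedge\underline b)W]_3,\\ 16[abI]_4&=(a_0b_0-\underline a\cdot\underline b)We-[(a_0\underline b+\underline ab_0)W]_4+[(\underline a\wedge\underline b)We]_4,\\ 16[abI]_5&=[(a_0\underline b+\underline ab_0)We]_5-[(\underline a\wedge\underline b)W]_5-(\underline a\wedge\underline b)e,\\ 16[abI]_6&=-(a_0\underline b+\underline ab_0)e+[(\underline a\wedge\underline b)We]_6,\\ 16[abI]_7&=-(a_0b_0-\underline a\cdot\underline b)e, \end{align*} and $[abI]_k=0\iff[abI]_{7-k}=0$ for $k=0,1,\dots,7$. Moreover, if $[abI]_0=0$, then the conditions $[abI]_j=0$, $j=2,3,4,5$, are pairwise equivalent. In particular, if $[abI]_0=[abI]_1=[abI]_2=0$, then $abI=0$.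
   Context: $\mathrm{Cl}_{0,7}$ is the real associative Clifford algebra generated by $e_1,\dots,e_7$ with $e_ie_j+e_je_i=-2\delta_{ij}$; $e_{i_1\cdots i_k}=e_{i_1}\cdots e_{i_k}$; $[c]_k$ denotes the grade-$k$ part of $c\in\mathrm{Cl}_{0,7}$. Paravectors are elements $x_0+\underline x$ with $\underline x=\sum_{i=1}^7x_ie_i$. For vectors: $\underline a\cdot\underline b=\sum_ia_ib_i$ and $\underline a\wedge\underline b=\sum_{1\le i\ne j\le7}a_ib_je_ie_j$. $W=e_{123}+e_{145}+e_{176}+e_{246}+e_{257}+e_{347}+e_{365}$, and $I=I^-=\frac1{16}(1+We_{1234567})(1-e_{1234567})$. *)

(* Real Clifford algebra Cl_{0,7}, modelled as coefficient
   functions on blades (subsets of {1,...,7}, encoded as {set 'I_7} with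
   generator e_i  <->  index i-1), with coefficients in a real field R. *)
From HB Require Import structures.
From mathcomp Require Import all_boot all_order all_algebra.
Unset Printing Implicit Defensive.
Import Order.TTheory GRing.Theory Num.Theory.
Local Open Scope ring_scope.

Notation cl R := {ffun {set 'I_7} -> R^o}.

(* the basis blade e_A (indices in increasing order) *)
Definition blade (R : realFieldType) (S : {set 'I_7}) : cl R :=
  [ffun T => (T == S)%:R].

(* sign of e_A e_B = sgn A B * e_(A symdiff B), using e_i e_j = - e_j e_i
   (i <> j) and e_i^2 = -1 *)
Definition clsgn (R : realFieldType) (A B : {set 'I_7}) : R :=
  (-1) ^+ (#| [set p : ('I_7 * 'I_7)%type | (p.1 \in A) && (p.2 \in B) && (p.2 < p.1)%N ] |
           + #|A :&: B|).

Definition clmul {R : realFieldType} (x y : cl R) : cl R :=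
  \sum_(A : {set 'I_7}) \sum_(B : {set 'I_7})
     (x A * y B * clsgn R A B) *: blade R ((A :\: B) :|: (B :\: A)).

Definition clsc (R : realFieldType) (c : R) : cl R := c *: blade R set0.

Definition gen (R : realFieldType) (i : nat) : cl R := blade R [set inord i.-1].

Definition grade {R : realFieldType} (k : nat) (x : cl R) : cl R :=
  [ffun A : {set 'I_7} => if #|A| == k then x A else 0].

(* vector x = sum_{i=1}^7 x_i e_i, coefficients x : 'I_7 -> R (x i = x_{i+1}) *)
Definition vec {R : realFieldType} (x : 'I_7 -> R) : cl R :=
  \sum_(i < 7) x i *: gen R i.+1.

Definition vdot {R : realFieldType} (a b : 'I_7 -> R) : R := \sum_(i < 7) a i * b i.

Definition vwedge {R : realFieldType} (a b : 'I_7 -> R) : cl R :=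
  \sum_(i < 7) \sum_(j < 7 | i != j)
     (a i * b j) *: clmul (gen R i.+1) (gen R j.+1).

Definition e3 (R : realFieldType) (i j k : nat) : cl R :=
  clmul (clmul (gen R i) (gen R j)) (gen R k).

Definition Wcl (R : realFieldType) : cl R :=
  e3 R 1 2 3 + e3 R 1 4 5 + e3 R 1 7 6 + e3 R 2 4 6 + e3 R 2 5 7
  + e3 R 3 4 7 + e3 R 3 6 5.

Definition e7 (R : realFieldType) : cl R :=
  clmul (clmul (clmul (clmul (clmul (clmul (gen R 1) (gen R 2)) (gen R 3))
     (gen R 4)) (gen R 5)) (gen R 6)) (gen R 7).

Definition Icl (R : realFieldType) : cl R :=
  (16%:R)^-1 *: clmul (clsc R 1 + clmul (Wcl R) (e7 R)) (clsc R 1 - e7 R).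

Definition para {R : realFieldType} (a0 : R) (a : 'I_7 -> R) : cl R :=
  clsc R a0 + vec a.

From Stdlib Require Import PeanoNat Lia.
From HB Require Import structures.
From mathcomp Require Import all_boot all_order all_algebra.
From mathcomp.algebra_tactics Require Import ring.
From mathcomp Require Import zify.
Import Order.TTheory GRing.Theory Num.Theory.
Local Open Scope ring_scope.

(* Every quantity in the statement is a polynomial expression, with integer
   coefficients, in the sixteen real variables a0, a_1..a_7, b0, b_1..b_7.
   We therefore introduce *symbolic Clifford expressions*: lists of terms
   c * x_(i1)...x_(im) * e_A with c an integer, x_i formal variables and the
   blade A encoded as a 7-bit mask.  Symbolic product, negation, grade
   projection and scaling by a polynomial are computable and are shown to
   commute with evaluation into Cl_{0,7} over any real field; a computable
   test compares two symbolic expressions after collecting like terms.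

   With this, the theorem splits into three computations with abI = ab I:
   - the eight grade formulas are equalities of symbolic expressions;
   - [abI]_(7-k) = -[abI]_k e for every k (since I e = -I and multiplying by
     the central pseudoscalar e exchanges the grades k and 7-k), which gives
     [abI]_k = 0 <-> [abI]_(7-k) = 0;
   - 16 abI = y (16 I) where y is the paravector part of 16 abI, and for a
     generic paravector y the vanishing of [y(16I)]_0 and of one [y(16I)]_j,
     0 < j < 7, forces y = 0 by a triangular linear elimination.
   The equivalences between the grades 2..5 follow from the last point. *)

Section CliffordAlgebra.
Variable R : realFieldType.

Lemma clmulDl (x y z : cl R) : clmul (x + y) z = clmul x z + clmul y z.
Proof.
rewrite /clmul -big_split /=; apply: eq_bigr => A _.
rewrite -big_split /=; apply: eq_bigr => B _.
by rewrite ffunE !mulrDl scalerDl.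
Qed.

Lemma clmulDr (x y z : cl R) : clmul x (y + z) = clmul x y + clmul x z.
Proof.
rewrite /clmul -big_split /=; apply: eq_bigr => A _.
rewrite -big_split /=; apply: eq_bigr => B _.
by rewrite ffunE mulrDr !mulrDl scalerDl.
Qed.

Lemma clmulZl (c : R) (x y : cl R) : clmul (c *: x) y = c *: clmul x y.
Proof.
rewrite /clmul scaler_sumr; apply: eq_bigr => A _.
rewrite scaler_sumr; apply: eq_bigr => B _.
by rewrite ffunE scalerA !mulrA.
Qed.

Lemma clmulZr (c : R) (x y : cl R) : clmul x (c *: y) = c *: clmul x y.
Proof.
rewrite /clmul scaler_sumr; apply: eq_bigr => A _.
rewrite scaler_sumr; apply: eq_bigr => B _.
by rewrite ffunE scalerA /GRing.scale /= mulrCA !mulrA.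
Qed.

Lemma clmul0l (y : cl R) : clmul 0 y = 0.
Proof.
by rewrite /clmul big1 // => A _; rewrite big1 // => B _; rewrite ffunE !mul0r scale0r.
Qed.

Lemma clmul0r (y : cl R) : clmul y 0 = 0.
Proof.
by rewrite /clmul big1 // => A _; rewrite big1 // => B _; rewrite ffunE mulr0 mul0r scale0r.
Qed.

Lemma clmul_suml I (r : seq I) (F : I -> cl R) (y : cl R) :
  clmul (\sum_(i <- r) F i) y = \sum_(i <- r) clmul (F i) y.
Proof. exact: (big_morph (fun x => clmul x y) (fun x z => clmulDl x z y) (clmul0l y)). Qed.

Lemma clmul_sumr I (r : seq I) (F : I -> cl R) (y : cl R) :
  clmul y (\sum_(i <- r) F i) = \sum_(i <- r) clmul y (F i).
Proof. exact: (big_morph (fun x => clmul y x) (fun x z => clmulDr y x z) (clmul0r y)). Qed.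

Lemma clmul_blade (A B : {set 'I_7}) :
  clmul (blade R A) (blade R B) = clsgn R A B *: blade R ((A :\: B) :|: (B :\: A)).
Proof.
rewrite /clmul (bigD1 A) //=.
have -> : \sum_(A' | A' != A) \sum_B' (blade R A A' * blade R B B' * clsgn R A' B')
    *: blade R ((A' :\: B') :|: (B' :\: A')) = 0.
  by apply: big1 => A' nA; apply: big1 => B' _; rewrite !ffunE (negbTE nA) !mul0r scale0r.
rewrite addr0 (bigD1 B) //=.
have -> : \sum_(B' | B' != B) (blade R A A * blade R B B' * clsgn R A B')
    *: blade R ((A :\: B') :|: (B' :\: A)) = 0.
  by apply: big1 => B' nB; rewrite !ffunE (negbTE nB) mulr0 mul0r scale0r.
by rewrite addr0 !ffunE !eqxx !mul1r.
Qed.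

Lemma gradeD k (x y : cl R) : grade k (x + y) = grade k x + grade k y.
Proof. by apply/ffunP => A; rewrite !ffunE; case: (#|A| == k); rewrite ?addr0. Qed.

Lemma grade0 k : grade k (0 : cl R) = 0.
Proof. by apply/ffunP => A; rewrite !ffunE; case: (#|A| == k). Qed.

Lemma gradeZ k c (x : cl R) : grade k (c *: x) = c *: grade k x.
Proof. by apply/ffunP => A; rewrite !ffunE; case: (#|A| == k); rewrite ?scaler0. Qed.

Lemma grade_blade k (A : {set 'I_7}) :
  grade k (blade R A) = if #|A| == k then blade R A else 0.
Proof.
apply/ffunP => B; case: ifP => hA; rewrite !ffunE;
  by case: (eqVneq B A) => [->|nBA]; rewrite ?hA ?if_same.
Qed.

End CliffordAlgebra.

(* Blades are encoded by 7-bit masks: bit i of m is set iff e_(i+1) occurs. *)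
Definition code_set (m : nat) : {set 'I_7} := [set i : 'I_7 | Nat.testbit m i].

(* computable counterparts of the cardinalities occurring in grade and clsgn *)
Definition sum7 (f : nat -> nat) : nat :=
  foldr (fun i acc => (f i + acc)%N) 0%N (iota 0 7).
Definition popcount (m : nat) : nat := sum7 (fun i => Nat.testbit m i).
Definition sign_exp (m n : nat) : nat :=
  (sum7 (fun i => sum7 (fun j => Nat.testbit m i && Nat.testbit n j && (j < i)%N))
   + sum7 (fun i => Nat.testbit m i && Nat.testbit n i))%N.

Lemma sum7E (f : nat -> nat) : sum7 f = (\sum_(i < 7) f i)%N.
Proof.
rewrite -(big_mkord xpredT f) /index_iota subn0 /=.
by rewrite !big_cons big_nil /sum7 /=.
Qed.

Lemma card_pairs (P : 'I_7 -> 'I_7 -> bool) :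
  #|[set p : ('I_7 * 'I_7)%type | P p.1 p.2]| = (\sum_(i < 7) \sum_(j < 7) P i j)%N.
Proof.
rewrite -sum1dep_card pair_big /= big_mkcond /=.
by apply: eq_big => [[i j]|[i j] _] //=; case: (P i j).
Qed.

Lemma sum_iota7 (V : nmodType) (F : nat -> V) : \sum_(i <- iota 0 7) F i = \sum_(i < 7) F i.
Proof. by rewrite -(big_mkord xpredT F). Qed.

Lemma card_sum7 (A : {set 'I_7}) : #|A| = (\sum_(i < 7) (i \in A))%N.
Proof. by rewrite -sum1_card big_mkcond /=; apply: eq_bigr => i _; case: (i \in A). Qed.

Lemma code_set_lxor m n :
  code_set (Nat.lxor m n) = (code_set m :\: code_set n) :|: (code_set n :\: code_set m).
Proof.
apply/setP => i; rewrite !inE Nat.lxor_spec.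
by case: (Nat.testbit m i); case: (Nat.testbit n i).
Qed.

Lemma card_code_set m : #|code_set m| = popcount m.
Proof. by rewrite card_sum7 /popcount sum7E; apply: eq_bigr => i _; rewrite inE. Qed.

Lemma clsgn_code (R : realFieldType) m n :
  clsgn R (code_set m) (code_set n) = (-1) ^+ sign_exp m n.
Proof.
rewrite /clsgn /sign_exp card_sum7 !sum7E.
rewrite (card_pairs (fun i j => (i \in code_set m) && (j \in code_set n) && (j < i)%N)).
congr (_ ^+ (_ + _))%N.
  by apply: eq_bigr => i _; rewrite sum7E; apply: eq_bigr => j _; rewrite !inE.
by apply: eq_bigr => i _; rewrite !inE.
Qed.

Lemma code_set0 : code_set 0 = set0.
Proof. by apply/setP => i; rewrite !inE Nat.bits_0. Qed.

Lemma code_set_pow2 i : (i < 7)%N -> code_set (Nat.pow 2 i) = [set inord i].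
Proof.
move=> hi; apply/setP => j; rewrite !inE Nat.pow2_bits_eqb.
case: Nat.eqb_spec => [->|ne]; first by apply/esym/eqP/val_inj; rewrite /= inordK.
by apply/esym/negbTE/eqP => ej; apply: ne; rewrite ej /= inordK.
Qed.

Lemma code_set_inj m n : (m < 128)%N -> (n < 128)%N -> code_set m = code_set n -> m = n.
Proof.
have high_bits a k : (a < 128)%N -> (7 <= k)%N -> Nat.testbit a k = false.
  case: a => [|a] ha hk; first exact: Nat.bits_0.
  apply: Nat.bits_above_log2.
  have : (Nat.log2 a.+1 < 7)%coq_nat by apply Nat.log2_lt_pow2; [lia | simpl; lia].
  lia.
move=> hm hn hmn; apply: Nat.bits_inj => k.
have [hk|hk] := ltnP k 7; last by rewrite !high_bits.
by have := congr1 (fun S : {set 'I_7} => Ordinal hk \in S) hmn; rewrite /= !inE.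
Qed.

(* A symbolic term ((m, xs), c) stands for c * x_xs * e_(code_set m), where
   x_xs is the product of the formal variables listed in xs; a symbolic
   expression is a list of terms, a symbolic polynomial a list of pairs
   (monomial, coefficient). *)
Definition sterm := ((nat * seq nat) * int)%type.
Definition sblade (t : sterm) : nat := t.1.1.
Definition smono (t : sterm) : seq nat := t.1.2.
Definition scoef (t : sterm) : int := t.2.
Definition spoly := seq (seq nat * int).

Definition smul_term (t1 t2 : sterm) : sterm :=
  ((Nat.lxor (sblade t1) (sblade t2), sort leq (smono t1 ++ smono t2)),
   scoef t1 * scoef t2 * (-1) ^+ sign_exp (sblade t1) (sblade t2)).
Definition smul (s1 s2 : seq sterm) : seq sterm :=
  [seq smul_term t1 t2 | t1 <- s1, t2 <- s2].
Definition sneg (s : seq sterm) : seq sterm := [seq (t.1, - scoef t) | t <- s].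
Definition sgrade (k : nat) (s : seq sterm) : seq sterm :=
  [seq t <- s | popcount (sblade t) == k].
Definition sscale (P : spoly) (s : seq sterm) : seq sterm :=
  [seq ((sblade t, sort leq (p.1 ++ smono t)), p.2 * scoef t) | p <- P, t <- s].

Definition skey (t : sterm) : nat * seq nat := t.1.
Definition coef_at (s : seq sterm) (k : nat * seq nat) : int :=
  foldr (fun t acc => if skey t == k then scoef t + acc else acc) 0 s.
Definition sexpr_eqb (s1 s2 : seq sterm) : bool :=
  all (fun k => coef_at s1 k == coef_at s2 k) (undup (map skey s1 ++ map skey s2)).

Section Evaluation.
Variables (R : realFieldType) (env : nat -> R).

Definition eval_mono (xs : seq nat) : R := \prod_(i <- xs) env i.
Definition eval_term (t : sterm) : cl R :=
  ((scoef t)%:~R * eval_mono (smono t)) *: blade R (code_set (sblade t)).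
Definition eval_expr (s : seq sterm) : cl R := \sum_(t <- s) eval_term t.
Definition eval_poly (P : spoly) : R := \sum_(p <- P) p.2%:~R * eval_mono p.1.

Lemma eval_mono_sort xs : eval_mono (sort leq xs) = eval_mono xs.
Proof. by apply: perm_big; rewrite perm_sort. Qed.

Lemma eval_mono_cat xs ys : eval_mono (xs ++ ys) = eval_mono xs * eval_mono ys.
Proof. by rewrite /eval_mono big_cat. Qed.

Lemma eval_smul_term t1 t2 :
  clmul (eval_term t1) (eval_term t2) = eval_term (smul_term t1 t2).
Proof.
rewrite /eval_term clmulZl clmulZr clmul_blade !scalerA clsgn_code -code_set_lxor.
congr (_ *: _); rewrite /smul_term /sblade /smono /scoef /= eval_mono_sort eval_mono_cat.
by rewrite !intrM rmorphXn /= rmorphN1 /GRing.scale /=; ring.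
Qed.

Lemma eval_cat s1 s2 : eval_expr (s1 ++ s2) = eval_expr s1 + eval_expr s2.
Proof. by rewrite /eval_expr big_cat. Qed.

Lemma eval_smul s1 s2 : clmul (eval_expr s1) (eval_expr s2) = eval_expr (smul s1 s2).
Proof.
rewrite /eval_expr /smul big_allpairs_dep clmul_suml; apply: eq_bigr => t1 _.
by rewrite clmul_sumr; apply: eq_bigr => t2 _; rewrite eval_smul_term.
Qed.

Lemma eval_sneg s : - eval_expr s = eval_expr (sneg s).
Proof.
rewrite /eval_expr /sneg big_map -sumrN; apply: eq_bigr => t _.
by rewrite /eval_term /scoef /smono /sblade /= intrN mulNr scaleNr.
Qed.

Lemma eval_sscale P s : eval_poly P *: eval_expr s = eval_expr (sscale P s).
Proof.
rewrite /eval_expr /eval_poly /sscale big_allpairs_dep scaler_suml.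
apply: eq_bigr => p _; rewrite scaler_sumr; apply: eq_bigr => t _.
rewrite /eval_term /scoef /smono /sblade /= scalerA eval_mono_sort eval_mono_cat intrM.
by congr (_ *: _); rewrite /GRing.scale /=; ring.
Qed.

Lemma eval_sgrade k s : grade k (eval_expr s) = eval_expr (sgrade k s).
Proof.
rewrite /eval_expr /sgrade big_filter (big_morph (grade k) (gradeD R k) (grade0 R k)).
rewrite [RHS]big_mkcond; apply: eq_bigr => t _.
by rewrite /eval_term gradeZ grade_blade card_code_set; case: ifP; rewrite ?scaler0.
Qed.

Lemma eval_collect s (U : seq (nat * seq nat)) : uniq U -> {subset map skey s <= U} ->
  eval_expr s = \sum_(k <- U) ((coef_at s k)%:~R * eval_mono k.2) *: blade R (code_set k.1).
Proof.
move=> uU; elim: s => [|t s IH] sub.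
  by rewrite /eval_expr big_nil big1 // => k _; rewrite /= mul0r scale0r.
rewrite /eval_expr big_cons -/(eval_expr s) IH => [|x hx]; last first.
  by apply: sub; rewrite inE hx orbT.
have kt : skey t \in U by apply: sub; rewrite inE eqxx.
rewrite (bigD1_seq (skey t)) //= [in RHS](bigD1_seq (skey t)) //= addrA; congr (_ + _).
  by rewrite eqxx intrD mulrDl scalerDl.
apply: eq_bigr => k /negbTE nk; by rewrite eq_sym nk.
Qed.

Lemma sexpr_eqbP s1 s2 : sexpr_eqb s1 s2 -> eval_expr s1 = eval_expr s2.
Proof.
move=> /allP same_coefs; have uU := undup_uniq (map skey s1 ++ map skey s2).
rewrite (eval_collect s1 _ uU) => [|x hx]; last by rewrite mem_undup mem_cat hx.
rewrite [RHS](eval_collect s2 _ uU) => [|x hx]; last by rewrite mem_undup mem_cat hx orbT.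
rewrite big_seq_cond [RHS]big_seq_cond; apply: eq_bigr => k /andP[hk _].
by rewrite (eqP (same_coefs k hk)).
Qed.

End Evaluation.
Arguments eval_mono {R}.
Arguments eval_term {R}.
Arguments eval_expr {R}.
Arguments eval_poly {R}.

(* Symbolic data of the theorem.  The variables are x_0 = a0, x_i = a_i and
   x_8 = b0, x_(8+i) = b_i for 1 <= i <= 7. *)
Definition s_one : seq sterm := [:: ((0%N, [::]), 1)].
Definition s_gen (i : nat) : seq sterm := [:: ((Nat.pow 2 i.-1, [::]), 1)].
Definition s_e3 (i j k : nat) : seq sterm := smul (smul (s_gen i) (s_gen j)) (s_gen k).
Definition s_W : seq sterm :=
  s_e3 1 2 3 ++ s_e3 1 4 5 ++ s_e3 1 7 6 ++ s_e3 2 4 6 ++ s_e3 2 5 7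
  ++ s_e3 3 4 7 ++ s_e3 3 6 5.
Definition s_e : seq sterm :=
  smul (smul (smul (smul (smul (smul (s_gen 1) (s_gen 2)) (s_gen 3)) (s_gen 4))
    (s_gen 5)) (s_gen 6)) (s_gen 7).
Definition s_16I : seq sterm := smul (s_one ++ smul s_W s_e) (s_one ++ sneg s_e).
Definition s_vec_a : seq sterm := [seq ((Nat.pow 2 i, [:: i.+1]), 1) | i <- iota 0 7].
Definition s_vec_b : seq sterm := [seq ((Nat.pow 2 i, [:: (i + 9)%N]), 1) | i <- iota 0 7].
Definition s_para_a : seq sterm := ((0%N, [:: 0%N]), 1) :: s_vec_a.
Definition s_para_b : seq sterm := ((0%N, [:: 8%N]), 1) :: s_vec_b.
Definition p_dot : spoly := [seq ([:: i.+1; (i + 9)%N], 1) | i <- iota 0 7].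
Definition p_s : spoly := ([:: 0%N; 8%N], 1) :: [seq (p.1, - p.2) | p <- p_dot].
Definition s_v : seq sterm := sscale [:: ([:: 0%N], 1)] s_vec_b ++ sscale [:: ([:: 8%N], 1)] s_vec_a.
(* a /\ b = a b + a . b *)
Definition s_w : seq sterm := smul s_vec_a s_vec_b ++ sscale p_dot s_one.
Definition s_abI16 : seq sterm := smul (smul s_para_a s_para_b) s_16I.

Section Encoding.
Variables (R : realFieldType) (a0 b0 : R) (a b : 'I_7 -> R).

Definition env_ab (k : nat) : R :=
  if (k < 8)%N then (if k == 0%N then a0 else a (inord k.-1))
  else (if k == 8%N then b0 else b (inord (k - 9))).

Local Notation eval := (eval_expr env_ab).

Lemma eval_single t : eval [:: t] = eval_term env_ab t.
Proof. by rewrite /eval_expr big_seq1. Qed.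

Lemma eval_one : eval s_one = blade R set0.
Proof. by rewrite eval_single /eval_term /eval_mono /= big_nil code_set0 mulr1 scale1r. Qed.

Lemma clsc_eval c : clsc R c = c *: eval s_one.
Proof. by rewrite eval_one. Qed.

Lemma gen_eval i : (0 < i <= 7)%N -> gen R i = eval (s_gen i).
Proof.
move=> /andP[i_gt0 i_le7]; rewrite eval_single /eval_term /eval_mono /= big_nil mulr1 scale1r.
by rewrite code_set_pow2 //; case: i i_gt0 i_le7.
Qed.

Lemma vec_a_eval : vec a = eval s_vec_a.
Proof.
rewrite /eval_expr /s_vec_a big_map sum_iota7 /vec; apply: eq_bigr => i _.
rewrite /eval_term /eval_mono /= big_seq1 mul1r code_set_pow2 // /env_ab /=.
by rewrite ltnS (ltn_ord i) /gen /= !inord_val.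
Qed.

Lemma vec_b_eval : vec b = eval s_vec_b.
Proof.
rewrite /eval_expr /s_vec_b big_map sum_iota7 /vec; apply: eq_bigr => i _.
rewrite /eval_term /eval_mono /= big_seq1 mul1r code_set_pow2 // /env_ab /=.
have -> : (i + 9 < 8)%N = false by lia.
have -> : (i + 9 == 8)%N = false by lia.
by rewrite addnK /gen /= !inord_val.
Qed.

Lemma eval_para_head (k : nat) (s : seq sterm) :
  eval (((0%N, [:: k]), 1) :: s) = clsc R (env_ab k) + eval s.
Proof.
by rewrite /eval_expr big_cons /eval_term /eval_mono /= big_seq1 mul1r code_set0.
Qed.

Lemma para_a_eval : para a0 a = eval s_para_a.
Proof. by rewrite /para vec_a_eval eval_para_head. Qed.

Lemma para_b_eval : para b0 b = eval s_para_b.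
Proof. by rewrite /para vec_b_eval eval_para_head. Qed.

Lemma vdot_eval : vdot a b = eval_poly env_ab p_dot.
Proof.
rewrite /eval_poly /p_dot big_map sum_iota7 /vdot; apply: eq_bigr => i _.
rewrite /eval_mono /= big_cons big_seq1 mul1r /env_ab /=.
have -> : (i + 9 < 8)%N = false by lia.
have -> : (i + 9 == 8)%N = false by lia.
by rewrite ltnS (ltn_ord i) addnK !inord_val.
Qed.

Lemma s_eval : a0 * b0 - vdot a b = eval_poly env_ab p_s.
Proof.
rewrite vdot_eval /p_s /eval_poly [RHS]big_cons [in RHS]big_map -sumrN.
congr (_ + _); first by rewrite /eval_mono /= big_cons big_seq1 mul1r.
by apply: eq_bigr => p _; rewrite /= intrN mulNr.
Qed.

Lemma eval_var k : env_ab k = eval_poly env_ab [:: ([:: k], 1)].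
Proof. by rewrite /eval_poly /eval_mono big_seq1 /= big_seq1 mul1r. Qed.

Lemma W_eval : Wcl R = eval s_W.
Proof. by rewrite /Wcl /e3 !gen_eval // !eval_smul -!eval_cat. Qed.

Lemma e_eval : e7 R = eval s_e.
Proof. by rewrite /e7 !gen_eval // !eval_smul. Qed.

Lemma abI_eval : clmul (clmul (para a0 a) (para b0 b)) (Icl R) = (16%:R)^-1 *: eval s_abI16.
Proof.
rewrite /Icl clsc_eval scale1r W_eval e_eval para_a_eval para_b_eval.
by rewrite clmulZr !eval_smul eval_sneg -!eval_cat !eval_smul.
Qed.

Lemma v_eval : a0 *: vec b + b0 *: vec a = eval s_v.
Proof. by rewrite /s_v eval_cat -!eval_sscale -!eval_var vec_a_eval vec_b_eval. Qed.

Lemma gen_sq i : (i < 7)%N -> clmul (gen R i.+1) (gen R i.+1) = - blade R set0.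
Proof.
move=> hi; rewrite gen_eval // eval_smul -eval_one eval_sneg.
by apply: sexpr_eqbP; case: i hi => [|[|[|[|[|[|[|]]]]]]].
Qed.

Lemma vwedge_eq : vwedge a b = clmul (vec a) (vec b) + clsc R (vdot a b).
Proof.
rewrite /vec clmul_suml.
have -> : \sum_(i < 7) clmul (a i *: gen R i.+1) (\sum_(j < 7) b j *: gen R j.+1)
   = \sum_(i < 7) ((a i * b i) *: (- blade R set0) +
        \sum_(j < 7 | i != j) (a i * b j) *: clmul (gen R i.+1) (gen R j.+1)).
  apply: eq_bigr => i _; rewrite clmul_sumr (bigD1 i) //=.
  rewrite clmulZl clmulZr scalerA gen_sq //; congr (_ + _).
  apply: eq_big => [j|j _]; first by rewrite eq_sym.
  by rewrite clmulZl clmulZr scalerA.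
rewrite big_split /= addrC -addrA.
suff -> : \sum_(i < 7) (a i * b i) *: - blade R set0 + clsc R (vdot a b) = 0 by rewrite addr0.
rewrite /clsc /vdot scaler_suml -big_split /=; apply: big1 => i _.
by rewrite scalerN addNr.
Qed.

Lemma w_eval : vwedge a b = eval s_w.
Proof.
by rewrite vwedge_eq clsc_eval vec_a_eval vec_b_eval vdot_eval eval_smul eval_sscale -eval_cat.
Qed.

End Encoding.
Arguments env_ab {R}.

Lemma sixteen_neq0 (R : realFieldType) : (16%:R : R) != 0.
Proof. by rewrite pnatr_eq0. Qed.

Lemma grade_abI16 (R : realFieldType) (a0 b0 : R) (a b : 'I_7 -> R) k :
  16%:R *: grade k (clmul (clmul (para a0 a) (para b0 b)) (Icl R))
  = eval_expr (env_ab a0 b0 a b) (sgrade k s_abI16).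
Proof. by rewrite abI_eval gradeZ scalerA mulfV ?sixteen_neq0 // scale1r eval_sgrade. Qed.

Lemma grade_formulas (R : realFieldType) (a0 b0 : R) (a b : 'I_7 -> R) :
  let abI := clmul (clmul (para a0 a) (para b0 b)) (Icl R) in
  let W := Wcl R in
  let e := e7 R in
  let s := a0 * b0 - vdot a b in
  let v := a0 *: vec b + b0 *: vec a in
  let w := vwedge a b in
  16%:R *: grade 0 abI = clsc R s /\
  16%:R *: grade 1 abI = v - grade 1 (clmul w W) /\
  16%:R *: grade 2 abI = w - grade 2 (clmul v W) + grade 2 (clmul (clmul w W) e) /\
  16%:R *: grade 3 abI =
    - (s *: W) + grade 3 (clmul (clmul v W) e) - grade 3 (clmul w W) /\
  16%:R *: grade 4 abI =
    s *: clmul W e - grade 4 (clmul v W) + grade 4 (clmul (clmul w W) e) /\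
  16%:R *: grade 5 abI =
    grade 5 (clmul (clmul v W) e) - grade 5 (clmul w W) - clmul w e /\
  16%:R *: grade 6 abI = - clmul v e + grade 6 (clmul (clmul w W) e) /\
  16%:R *: grade 7 abI = - (s *: e).
Proof.
move=> abI W e s v w; rewrite !grade_abI16 /W /e /s /v /w.
rewrite (W_eval _ a0 b0 a b) (e_eval _ a0 b0 a b) (clsc_eval _ a0 b0 a b).
rewrite s_eval v_eval (w_eval _ a0 b0).
rewrite !(eval_smul, eval_sgrade, eval_sneg, eval_sscale) -!eval_cat.
repeat match goal with |- _ /\ _ => split end.
all: by apply: sexpr_eqbP; vm_compute.
Qed.

(* I e = -I, and right multiplication by the central pseudoscalar e maps the
   grade k onto the grade 7-k; hence [abI]_(7-k) = -[abI]_k e for every k,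
   which we check on the symbolic expression. *)
Lemma s_abI16_duality : all (fun k =>
  sexpr_eqb (sgrade (7 - k) s_abI16) (sneg (smul (sgrade k s_abI16) s_e))) (iota 0 8).
Proof. by vm_compute. Qed.

Lemma abI_duality (R : realFieldType) (a0 b0 : R) (a b : 'I_7 -> R) k : (k <= 7)%N ->
  let abI := clmul (clmul (para a0 a) (para b0 b)) (Icl R) in
  grade (7 - k) abI = - clmul (grade k abI) (e7 R).
Proof.
move=> hk abI; apply: (scalerI (sixteen_neq0 R)).
have /sexpr_eqbP dual : sexpr_eqb (sgrade (7 - k) s_abI16) (sneg (smul (sgrade k s_abI16) s_e)).
  by apply: (allP s_abI16_duality); rewrite mem_iota.
rewrite /= grade_abI16 dual -eval_sneg -eval_smul -grade_abI16 (e_eval _ a0 b0 a b).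
by rewrite clmulZl scalerN.
Qed.

Definition lin_coef (P : spoly) (k : nat) : int :=
  foldr (fun p acc => if p.1 == [:: k] then p.2 + acc else acc) 0 P.
Definition linear_poly (P : spoly) : bool :=
  all (fun p => (size p.1 == 1%N) && (head 0%N p.1 < 8)%N) P.
Definition linear_expr (s : seq sterm) : bool :=
  all (fun t => (size (smono t) == 1%N) && (head 0%N (smono t) < 8)%N) s.
Definition blade_poly (s : seq sterm) (C : nat) : spoly :=
  [seq (smono t, scoef t) | t <- s & sblade t == C].
Definition masks_ok (s : seq sterm) : bool := all (fun t => sblade t < 128)%N s.
Definition isolates (s : seq sterm) (Z : seq nat) (k : nat) : bool :=
  has (fun C => [&& (C < 128)%N, linear_poly (blade_poly s C),
    lin_coef (blade_poly s C) k != 0 &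
    all (fun k' => (k' == k) || (k' \in Z) || (lin_coef (blade_poly s C) k' == 0))
      (iota 0 8)]) (map sblade s).
Definition subst_lin (Q : nat -> spoly) (s : seq sterm) : seq sterm :=
  flatten [seq (if smono t is [:: k] then sscale (Q k) [:: ((sblade t, [::]), scoef t)]
                else [:: t]) | t <- s].

Section Elimination.
Variables (R : realFieldType) (env : nat -> R).

Lemma eval_blade_poly s C : masks_ok s -> (C < 128)%N ->
  eval_expr env s (code_set C) = eval_poly env (blade_poly s C).
Proof.
move=> /allP s_ok hC.
rewrite /eval_expr sum_ffunE /eval_poly /blade_poly big_map big_filter.
rewrite big_seq_cond [RHS]big_seq_cond [RHS]big_mkcond /= big_mkcond /=.
apply: eq_bigr => t _; rewrite andbT.
case: (boolP (t \in s)) => ts //=; rewrite !ffunE /GRing.scale /=.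
have [<-|nCt] := eqVneq (sblade t) C; first by rewrite eqxx mulr1n mulr1.
have -> : (code_set C == code_set (sblade t)) = false.
  by apply/negbTE/eqP => /(code_set_inj _ _ hC (s_ok t ts)) eCt; rewrite eCt eqxx in nCt.
by rewrite mulr0n mulr0.
Qed.

Lemma eval_linear_poly P : linear_poly P ->
  eval_poly env P = \sum_(k <- iota 0 8) (lin_coef P k)%:~R * env k.
Proof.
elim: P => [|[xs c] P IH] linP.
  by rewrite /eval_poly big_nil big1 // => k _; rewrite mul0r.
move: linP; rewrite /linear_poly [all _ _]/= -/(linear_poly P) => /andP[/andP[]].
case: xs => [|k0 [|]] // _ k0_lt8 linP.
rewrite /eval_poly big_cons -/(eval_poly env P) IH //.
rewrite [RHS](eq_bigr (fun k => (if k0 == k then c else 0)%:~R * env k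
                                + (lin_coef P k)%:~R * env k)); last first.
  move=> k _; rewrite /= eqseq_cons andbT.
  by case: (k0 == k); rewrite ?mul0r ?add0r // intrD mulrDl.
rewrite big_split /=; congr (_ + _).
have k0_in : k0 \in iota 0 8 by rewrite mem_iota.
rewrite [RHS](bigD1_seq k0) ?iota_uniq // eqxx big1.
  by rewrite /eval_mono big_seq1 [RHS]addr0.
by move=> k /negbTE; rewrite eq_sym => ->; rewrite mul0r.
Qed.

Lemma isolated_var_vanish s Z k : masks_ok s -> eval_expr env s = 0 ->
  (forall k', k' \in Z -> env k' = 0) -> isolates s Z k -> (k < 8)%N -> env k = 0.
Proof.
move=> s_ok s0 Z0 /hasP[C _ /and4P[hC linC hk others]] k_lt8.
have := eval_blade_poly _ _ s_ok hC; rewrite s0 ffunE eval_linear_poly // => /esym.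
rewrite (bigD1_seq k) ?mem_iota ?iota_uniq //= big1_seq ?addr0.
  by move/eqP; rewrite mulf_eq0 intr_eq0 (negbTE hk) => /eqP.
move=> k' /andP[nk k'_in]; have := allP others k' k'_in; rewrite (negbTE nk) /=.
by case/orP => [/Z0 ->|/eqP ->]; rewrite ?mulr0 ?mul0r.
Qed.

Lemma eval_linear_expr_zero s : linear_expr s ->
  (forall k, (k < 8)%N -> env k = 0) -> eval_expr env s = 0.
Proof.
move=> /allP lin_s env0; rewrite /eval_expr big1_seq // => t /andP[_ ts].
case/andP: (lin_s t ts); rewrite /eval_term /eval_mono; case: (smono t) => [|k [|]] //= _ hk.
by rewrite big_seq1 env0 // mulr0 scale0r.
Qed.

Lemma eval_subst_lin (Q : nat -> spoly) s : linear_expr s ->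
  eval_expr (fun k => eval_poly env (Q k)) s = eval_expr env (subst_lin Q s).
Proof.
elim: s => [|t s IH] /=; first by rewrite /eval_expr !big_nil.
case/andP=> lin_t lin_s; rewrite /subst_lin /= eval_cat -/(subst_lin Q s) -IH //.
rewrite /eval_expr big_cons -/(eval_expr _ s); congr (_ + _).
move: lin_t; rewrite /eval_term; case: (smono t) => [|k [|]] //= _.
rewrite -[RHS]/(eval_expr env (sscale (Q k) [:: ((sblade t, [::]), scoef t)])).
rewrite -eval_sscale /eval_expr big_seq1 /eval_term /eval_mono /= big_nil big_seq1.
by rewrite scalerA mulr1 /GRing.scale /= mulrC.
Qed.

End Elimination.
Arguments isolated_var_vanish {R env s Z k}.
Arguments eval_blade_poly {R env s C}.
Arguments eval_linear_expr_zero {R env s}.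
Arguments eval_subst_lin {R env} Q {s}.

(* the mask of the k-th paravector coordinate: 1, e_1, ..., e_7 (and 1 beyond) *)
Definition para_mask (k : nat) : nat := if (0 < k < 8)%N then Nat.pow 2 k.-1 else 0%N.

Lemma para_mask_lt k : (para_mask k < 128)%N.
Proof. by rewrite /para_mask; case: k => [|[|[|[|[|[|[|[|k]]]]]]]]. Qed.

(* y (16 I) for the generic paravector y = x_0 + x_1 e_1 + ... + x_7 e_7 *)
Definition s_y16I : seq sterm := smul s_para_a s_16I.

Lemma s_y16I_elimination :
  [&& linear_expr s_y16I, masks_ok (sgrade 0 s_y16I), isolates (sgrade 0 s_y16I) [::] 0 &
   all (fun j => masks_ok (sgrade j s_y16I) && all (isolates (sgrade j s_y16I) [:: 0%N]) (iota 1 7))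
     (iota 1 6)].
Proof. by vm_compute. Qed.

Lemma para_ideal_vanish (R : realFieldType) (y : nat -> R) j : (0 < j < 7)%N ->
  grade 0 (eval_expr y s_y16I) = 0 -> grade j (eval_expr y s_y16I) = 0 ->
  eval_expr y s_y16I = 0.
Proof.
move=> hj; rewrite !eval_sgrade => g0 gj.
case/and4P: s_y16I_elimination => lin ok0 iso0 /allP isoj.
have /andP[okj /allP isoj'] : masks_ok (sgrade j s_y16I) &&
    all (isolates (sgrade j s_y16I) [:: 0%N]) (iota 1 7) by apply: isoj; rewrite mem_iota; lia.
have y0 : y 0%N = 0 by apply: (isolated_var_vanish ok0 g0 _ iso0).
apply: (eval_linear_expr_zero lin) => -[_|k k_lt8]; first exact: y0.
apply: (isolated_var_vanish (Z := [:: 0%N]) okj gj); last exact: k_lt8.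
- by move=> k'; rewrite inE => /eqP ->.
- by apply: isoj'; rewrite mem_iota; lia.
Qed.

(* 16 abI = y (16 I) where y is the paravector part of 16 abI *)
Lemma s_abI16_factor : masks_ok s_abI16 &&
  sexpr_eqb s_abI16 (subst_lin (fun k => blade_poly s_abI16 (para_mask k)) s_y16I).
Proof. by vm_compute. Qed.

Lemma eq_eval_expr (R : realFieldType) (env1 env2 : nat -> R) s :
  env1 =1 env2 -> eval_expr env1 s = eval_expr env2 s.
Proof.
move=> e12; apply: eq_bigr => t _; rewrite /eval_term /eval_mono.
by under eq_bigr do rewrite e12.
Qed.

Lemma abI16_factor (R : realFieldType) (env : nat -> R) :
  eval_expr env s_abI16
  = eval_expr (fun k => eval_expr env s_abI16 (code_set (para_mask k))) s_y16I.
Proof.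
case/andP: s_abI16_factor => ok same.
case/and4P: s_y16I_elimination => lin _ _ _.
rewrite [LHS](sexpr_eqbP _ env _ _ same) -(eval_subst_lin _ lin); apply: eq_eval_expr => k.
exact: esym (eval_blade_poly ok (para_mask_lt k)).
Qed.

Lemma abI_vanish (R : realFieldType) (a0 b0 : R) (a b : 'I_7 -> R) j : (0 < j < 7)%N ->
  let abI := clmul (clmul (para a0 a) (para b0 b)) (Icl R) in
  grade 0 abI = 0 -> grade j abI = 0 -> abI = 0.
Proof.
move=> hj abI g0 gj.
have grade_X i : grade i abI = 0 -> grade i (eval_expr (env_ab a0 b0 a b) s_abI16) = 0.
  by move=> gi; rewrite eval_sgrade -grade_abI16 gi scaler0.
have X0 : eval_expr (env_ab a0 b0 a b) s_abI16 = 0.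
  by rewrite abI16_factor; apply: (para_ideal_vanish _ _ _ hj); rewrite -abI16_factor; apply: grade_X.
by rewrite /abI abI_eval X0 scaler0.
Qed.

Theorem lemma5p1 (R : realFieldType) (a0 b0 : R) (a b : 'I_7 -> R) :
  let abI := clmul (clmul (para a0 a) (para b0 b)) (Icl R) in
  let W := Wcl R in
  let e := e7 R in
  let s := a0 * b0 - vdot a b in
  let v := a0 *: vec b + b0 *: vec a in
  let w := vwedge a b in
  (16%:R *: grade 0 abI = clsc R s /\
      16%:R *: grade 1 abI = v - grade 1 (clmul w W) /\
      16%:R *: grade 2 abI = w - grade 2 (clmul v W) + grade 2 (clmul (clmul w W) e) /\
      16%:R *: grade 3 abI =
        - (s *: W) + grade 3 (clmul (clmul v W) e) - grade 3 (clmul w W) /\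
      16%:R *: grade 4 abI =
        s *: clmul W e - grade 4 (clmul v W) + grade 4 (clmul (clmul w W) e) /\
      16%:R *: grade 5 abI =
        grade 5 (clmul (clmul v W) e) - grade 5 (clmul w W) - clmul w e /\
      16%:R *: grade 6 abI = - clmul v e + grade 6 (clmul (clmul w W) e) /\
      16%:R *: grade 7 abI = - (s *: e))
  /\ (forall k : nat, (k <= 7)%N -> (grade k abI = 0 <-> grade (7 - k) abI = 0))
  /\ (grade 0 abI = 0 ->
        forall j1 j2 : nat, (2 <= j1 <= 5)%N -> (2 <= j2 <= 5)%N ->
          (grade j1 abI = 0 <-> grade j2 abI = 0))
  /\ (grade 0 abI = 0 -> grade 1 abI = 0 -> grade 2 abI = 0 -> abI = 0).
Proof.
move=> abI W e s v w.
have dual k : (k <= 7)%N -> grade (7 - k) abI = - clmul (grade k abI) e.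
  exact: abI_duality.
have vanish j : (0 < j < 7)%N -> grade 0 abI = 0 -> grade j abI = 0 -> abI = 0.
  exact: abI_vanish.
split; first exact: grade_formulas.
split.
  move=> k hk; split => [gk | gk'].
    by rewrite dual // gk clmul0l oppr0.
  by rewrite -(subKn hk) dual ?leq_subr // gk' clmul0l oppr0.
split.
  move=> g0 j1 j2 hj1 hj2; split => gj.
    by rewrite (vanish j1) ?grade0 //; lia.
  by rewrite (vanish j2) ?grade0 //; lia.
by move=> g0 g1 _; apply: (vanish 1%N).
Qed.
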